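(* Let $\Delta$ be a CNF whose primal treewidth is $w$, and let $\Sigma$ be a CNF obtained by applying the BVA transformation $k$ times successively starting from $\Delta$. Then the primal treewidth of $\Sigma$ is at most $w+k$.
   Context: BVA transformation: given a CNF $\Delta$ and a fresh variable $Y$ not occurring in $\Delta$, choose a set $C_Y = \{Y \vee \alpha_1,\ldots, Y\vee \alpha_m\}$ of clauses containing literal $Y$ and a set $C_{\neg Y} = \{\neg Y \vee \beta_1,\ldots,\neg Y\vee\beta_k\}$ of clauses containing $\neg Y$ (with $\alpha_i,\beta_j$ clauses over variables of $\Delta$) such that the set of resolvents $C_Y \bowtie C_{\neg Y} = \{\alpha_i \vee \beta_j\}$ is contained in the clauses of $\Delta$ and $|C_Y \bowtie C_{\neg Y}| > |C_Y| + |C_{\neg Y}|$; the result is $\Delta$ with the clauses $C_Y \bowtie C_{\neg Y}$ removed and the clauses $C_Y \cup C_{\neg Y}$ added. Primal treewidth: a jointree for a CNF $\Delta$ is a tree whose vertices are labeled with subsets (clusters) of the variables of $\Delta$ such that (i) for each clause of $\Delta$ some cluster contains all its variables, and (ii) if a variable appears in the clusters of two vertices then it appears in every cluster on the path between them. The width of a jointree is its largest cluster size minus 1; the primal treewidth of $\Delta$ is the minimum width of a jointree for $\Delta$ (equivalently, the treewidth of the primal graph, whose vertices are the variables with an edge between two variables iff they occur together in some clause). *)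

From HB Require Import structures.
From mathcomp Require Import all_boot.
From mathcomp Require Import finmap.

Set Implicit Arguments.
Unset Strict Implicit.
Unset Printing Implicit Defensive.

Local Open Scope fset_scope.

(* Variables are natural numbers; a literal is a pair (x, b):
   (x, true) is the positive literal x, (x, false) is the negative literal ~x. *)
Definition var := nat.
Definition lit := (nat * bool)%type.
Definition clause := {fset lit}.
Definition cnf := {fset clause}.

Definition clause_vars (c : clause) : {fset nat} := [fset l.1 | l in c].
Definition cnf_vars (D : cnf) : {fset nat} :=
  \big[fsetU/fset0]_(c <- D) clause_vars c.

Definition add_lit (l : lit) (a : clause) : clause := l |` a.

(* One BVA step from D to S: C_Y = {Y \/ a | a in A}, C_~Y = {~Y \/ b | b in B},
   resolvents {a \/ b | a in A, b in B}. *)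
Definition resolvents (A B : {fset clause}) : {fset clause} :=
  [fset a `|` b | a in A, b in B].
Definition pos_clauses (Y : nat) (A : {fset clause}) : {fset clause} :=
  [fset add_lit (Y, true) a | a in A].
Definition neg_clauses (Y : nat) (B : {fset clause}) : {fset clause} :=
  [fset add_lit (Y, false) b | b in B].

Definition bva_step (D S : cnf) : Prop :=
  exists (Y : nat) (A B : {fset clause}),
    [/\ Y \notin cnf_vars D,
        (forall a, a \in A -> clause_vars a `<=` cnf_vars D),
        (forall b, b \in B -> clause_vars b `<=` cnf_vars D),
        resolvents A B `<=` D &
        #|` resolvents A B | > #|` pos_clauses Y A | + #|` neg_clauses Y B |] /\
    S = (D `\` resolvents A B) `|` pos_clauses Y A `|` neg_clauses Y B.

Fixpoint bva_steps (k : nat) (D S : cnf) : Prop :=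
  match k with
  | 0 => S = D
  | k'.+1 => exists D', bva_step D D' /\ bva_steps k' D' S
  end.

Definition is_tree (V : finType) (e : rel V) : Prop :=
  [/\ 0 < #|V|, symmetric e, irreflexive e,
      (forall u v, connect e u v) &
      (forall c : seq V, uniq c -> 2 < size c -> ~~ cycle e c)].

Definition simple_path (V : finType) (e : rel V) (u v : V) (p : seq V) : bool :=
  [&& path e u p, last u p == v & uniq (u :: p)].

Definition is_jointree (D : cnf) (V : finType) (e : rel V) (cl : V -> {fset nat}) : Prop :=
  [/\ is_tree e,
      (forall v, cl v `<=` cnf_vars D),
      (forall c, c \in D -> exists v, clause_vars c `<=` cl v) &
      (forall x u v p, x \in cl u -> x \in cl v -> simple_path e u v p ->
                       all (fun w => x \in cl w) p)].

Definition jt_width (V : finType) (cl : V -> {fset nat}) : nat :=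
  (\max_(v : V) #|` cl v |) - 1.

Definition has_jointree_of_width (D : cnf) (w : nat) : Prop :=
  exists (V : finType) (e : rel V) (cl : V -> {fset nat}),
    is_jointree D e cl /\ jt_width cl = w.

Lemma has_jointree_exists (D : cnf) : exists w, has_jointree_of_width D w.
Proof.
exists (jt_width (fun _ : unit => cnf_vars D)).
exists unit, (fun _ _ => false), (fun _ => cnf_vars D); split; last by [].
split.
- split.
  + by rewrite card_unit.
  + by move=> [] [].
  + by move=> [].
  + by move=> [] [].
  + move=> c Uc Sc.
    have H1 : #|[pred x in c]| <= #|{: unit}| by apply: max_card.
    move: H1; rewrite card_unit (card_uniqP Uc) => H1.
    by move: (leq_trans Sc H1).
- by [].
- move=> c cD; exists tt.
  rewrite /cnf_vars (big_rem c) //=; exact: fsubsetUl.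
- move=> x u v p _ xD _; apply/allP => w _; exact: xD.
Qed.

(* [is_primal_treewidth D w]: w is the primal treewidth of D, i.e. the
   minimum width of a jointree for D (such a minimum always exists, since
   jointrees exist by [has_jointree_exists] and widths are natural numbers). *)
Definition is_primal_treewidth (D : cnf) (w : nat) : Prop :=
  has_jointree_of_width D w /\
  (forall w', has_jointree_of_width D w' -> w <= w').

From Stdlib Require Import Classical.
From HB Require Import structures.
From mathcomp Require Import all_boot.
From mathcomp Require Import finmap.
From mathcomp Require Import zify.

(* A BVA step with fresh variable Y replaces the resolvents a \/ b by the
   clauses Y \/ a and ~Y \/ b, whose variables are those of some removed
   resolvent plus Y.  Hence adding Y to every cluster of a jointree for the
   old CNF yields a jointree for the new one: Y lies in every cluster, so the
   running-intersection property for Y is trivial, and the width grows by at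
   most one. *)

Set Implicit Arguments.
Unset Strict Implicit.
Unset Printing Implicit Defensive.

Local Open Scope fset_scope.

Lemma cnf_varsP (D : cnf) x :
  reflect (exists2 c, c \in D & x \in clause_vars c) (x \in cnf_vars D).
Proof.
rewrite /cnf_vars; apply: (iffP (bigfcupP _ _ _ xpredT)).
- by move=> [c /andP[cD _] xc]; exists c.
- by move=> [c cD xc]; exists c; rewrite ?cD.
Qed.

Lemma clause_varsU (a b : clause) :
  clause_vars (a `|` b) = clause_vars a `|` clause_vars b.
Proof. exact: imfsetU. Qed.

Lemma clause_vars_add_lit (l : lit) (a : clause) :
  clause_vars (add_lit l a) = l.1 |` clause_vars a.
Proof. exact: imfsetU1. Qed.

Lemma clause_varsS (a b : clause) :
  a `<=` b -> clause_vars a `<=` clause_vars b.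
Proof.
move=> /fsubsetP ab; apply/fsubsetP => x /imfsetP [l /= la ->].
by apply/imfsetP; exists l => //; apply: ab.
Qed.

Lemma is_jointree_fset1U (D D' : cnf) (V : finType) (e : rel V)
    (cl : V -> {fset nat}) (y : nat) :
  is_jointree D e cl -> y \in cnf_vars D' -> cnf_vars D `<=` cnf_vars D' ->
  (forall c, c \in D' ->
     exists2 c0, c0 \in D & clause_vars c `<=` y |` clause_vars c0) ->
  is_jointree D' e (fun v => y |` cl v).
Proof.
move=> [tree clD cover rip] yD' DD' coverD'; split => //.
- move=> v; apply/fsubsetP => x /fset1UP [-> //|xv].
  exact: (fsubsetP DD') (fsubsetP (clD v) _ xv).
- move=> c /coverD' [c0 /cover [v c0v] cc0]; exists v.
  by apply: (fsubset_trans cc0); apply: fsetUS.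
- move=> x u v p /fset1UP [-> _ _|xu]; first by apply/allP => z _; apply: fset1U1.
  move=> /fset1UP [-> _|xv sp]; first by apply/allP => z _; apply: fset1U1.
  by apply: sub_all (rip x u v p xu xv sp) => z xz; apply/fset1UP; right.
Qed.

Lemma jt_width_fset1U (V : finType) (cl : V -> {fset nat}) (y : nat) :
  jt_width (fun v => y |` cl v) <= (jt_width cl).+1.
Proof.
have : \max_(v : V) #|` y |` cl v| <= (\max_(v : V) #|` cl v|).+1.
  apply/bigmax_leqP => v _; rewrite cardfsU1.
  have := @leq_bigmax _ (fun v => #|` cl v|) v.
  by case: (y \notin cl v) => /= [|/leqW].
rewrite /jt_width; lia.
Qed.

Section BvaStep.

Variables (D : cnf) (Y : nat) (A B : {fset clause}) (a0 b0 : clause).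
Hypotheses (a0A : a0 \in A) (b0B : b0 \in B) (resAB : resolvents A B `<=` D).

Let S := (D `\` resolvents A B) `|` pos_clauses Y A `|` neg_clauses Y B.

Lemma mem_resolvents a b : a \in A -> b \in B -> a `|` b \in resolvents A B.
Proof. exact: in_imfset2. Qed.

Lemma bva_pos_clause a : a \in A -> add_lit (Y, true) a \in S.
Proof. by move=> aA; rewrite !in_fsetU (in_imfset _ _ aA) orbT. Qed.

Lemma bva_neg_clause b : b \in B -> add_lit (Y, false) b \in S.
Proof. by move=> bB; rewrite !in_fsetU (in_imfset _ _ bB) orbT. Qed.

Lemma mem_cnf_vars_bva_var : Y \in cnf_vars S.
Proof.
apply/cnf_varsP; exists (add_lit (Y, true) a0); first exact: bva_pos_clause.
by rewrite clause_vars_add_lit fset1U1.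
Qed.

Lemma bva_cnf_vars_sub : cnf_vars D `<=` cnf_vars S.
Proof.
apply/fsubsetP => x /cnf_varsP [c cD xc].
have [/imfset2P [a aA [b bB c_ab]]|cR] := boolP (c \in resolvents A B).
  move: xc; rewrite c_ab clause_varsU => /fsetUP [xa|xb]; apply/cnf_varsP.
  - exists (add_lit (Y, true) a); first exact: bva_pos_clause.
    by rewrite clause_vars_add_lit fset1Ur.
  - exists (add_lit (Y, false) b); first exact: bva_neg_clause.
    by rewrite clause_vars_add_lit fset1Ur.
by apply/cnf_varsP; exists c => //; rewrite !in_fsetU in_fsetD cR cD.
Qed.

Lemma bva_clause_covered c : c \in S ->
  exists2 c0, c0 \in D & clause_vars c `<=` Y |` clause_vars c0.
Proof.
rewrite !in_fsetU => /orP [/orP [|] |].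
- by rewrite in_fsetD => /andP [_ cD]; exists c => //; apply: fsubsetU1.
- move=> /imfsetP [a aA ->]; exists (a `|` b0).
    by apply: (fsubsetP resAB); apply: mem_resolvents.
  by rewrite clause_vars_add_lit clause_varsU fsetUS ?fsubsetUl.
- move=> /imfsetP [b bB ->]; exists (a0 `|` b).
    by apply: (fsubsetP resAB); apply: mem_resolvents.
  by rewrite clause_vars_add_lit clause_varsU fsetUS ?fsubsetUr.
Qed.

Lemma has_jointree_bva_result w : has_jointree_of_width D w ->
  exists2 w', w' <= w.+1 & has_jointree_of_width S w'.
Proof.
move=> [V [e [cl [jt <-]]]].
exists (jt_width (fun v => Y |` cl v)); first exact: jt_width_fset1U.
exists V, e, (fun v => Y |` cl v); split => //.
apply: is_jointree_fset1U jt mem_cnf_vars_bva_var bva_cnf_vars_sub _.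
exact: bva_clause_covered.
Qed.

End BvaStep.

Lemma resolvents_neq0 (A B : {fset clause}) :
  resolvents A B != fset0 -> exists a b, a \in A /\ b \in B.
Proof.
case/fset0Pn => _ /imfset2P [a aA [b bB _]].
by exists a, b.
Qed.

Lemma has_jointree_bva_step (D S : cnf) w :
  bva_step D S -> has_jointree_of_width D w ->
  exists2 w', w' <= w.+1 & has_jointree_of_width S w'.
Proof.
move=> [Y [A [B [[_ _ _ resAB card_res] ->]]]].
have /resolvents_neq0 [a0 [b0 [a0A b0B]]] : resolvents A B != fset0.
  by rewrite -cardfs_gt0; apply: leq_ltn_trans card_res.
exact: has_jointree_bva_result a0A b0B resAB w.
Qed.

Lemma has_jointree_bva_steps k (D S : cnf) w :
  bva_steps k D S -> has_jointree_of_width D w ->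
  exists2 w', w' <= w + k & has_jointree_of_width S w'.
Proof.
elim: k D w => [|k IH] D w /=; first by move=> -> jtD; exists w; rewrite ?addn0.
move=> [D' [step steps]] /(has_jointree_bva_step step) [w1 le_w1 jtD'].
have [w2 le_w2 jtS] := IH _ _ steps jtD'.
by exists w2 => //; rewrite addnS -addSn (leq_trans le_w2) ?leq_add2r.
Qed.

Lemma primal_treewidth_exists (D : cnf) w :
  has_jointree_of_width D w -> exists2 w', is_primal_treewidth D w' & w' <= w.
Proof.
elim/ltn_ind: w => w IH jtD.
have [[w' [lt_w' jtD']]|no_smaller] :=
  classic (exists w', w' < w /\ has_jointree_of_width D w').
  have [w'' tw le_w''] := IH w' lt_w' jtD'.
  by exists w'' => //; apply: leq_trans le_w'' (ltnW lt_w').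
exists w => //; split => // w' jtD'; rewrite leqNgt; apply/negP => lt_w'.
by apply: no_smaller; exists w'.
Qed.

Theorem theorem4 (D S : cnf) (w k : nat) :
  is_primal_treewidth D w -> bva_steps k D S ->
  exists w', is_primal_treewidth S w' /\ w' <= w + k.
Proof.
move=> [jtD _] steps.
have [w1 le_w1 jtS] := has_jointree_bva_steps steps jtD.
have [w' twS le_w'] := primal_treewidth_exists jtS.
by exists w'; split; last exact: leq_trans le_w1.
Qed.
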